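(* For all $m\geq 2$: $s_{1,m}(122,213)=1$, $s_{2,m}(122,213)=m+1$, and for all $n\geq 3$, \[ s_{n,m}(122,213)=m\,s_{n-1,m}(122,213)+s_{n-2,m}(122,213). \]
   Context: $[n]_m=\{1^m,\ldots,n^m\}$; a permutation of $[n]_m$ is a sequence of length $nm$ in which each element of $[n]$ appears exactly $m$ times. A sequence avoids a pattern $\pi$ if it has no subsequence order-isomorphic to $\pi$ (same relative order and same equalities among entries). $s_{n,m}(\Pi)$ is the number of permutations of $[n]_m$ avoiding all patterns in $\Pi$. *)

From mathcomp Require Import all_boot.
Set Implicit Arguments. Unset Strict Implicit. Unset Printing Implicit Defensive.

Definition order_iso (s p : seq nat) : bool :=
  (size s == size p) &&
  [forall i : 'I_(size s), forall j : 'I_(size s),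
     ((nth 0 s i < nth 0 s j) == (nth 0 p i < nth 0 p j)) &&
     ((nth 0 s i == nth 0 s j) == (nth 0 p i == nth 0 p j))].

Definition contains (s p : seq nat) : bool :=
  [exists msk : (size s).-tuple bool, order_iso (mask msk s) p].

Definition avoids (s p : seq nat) : bool := ~~ contains s p.

(* Permutations of the multiset [n]_m = {1^m,...,n^m}, represented with
   letters 0..n-1 (i.e. letter k stands for k+1; avoidance is invariant
   under this shift): words of length n*m over 'I_n in which each letter
   occurs exactly m times. *)
Definition is_multiperm (n m : nat) (w : (n * m).-tuple 'I_n) : bool :=
  [forall k : 'I_n, count_mem k w == m].

Definition s_nm (n m : nat) (Pi : seq (seq nat)) : nat :=
  #|[set w : (n * m).-tuple 'I_n |
       is_multiperm w && all (fun p => avoids (map (@nat_of_ord n) w) p) Pi]|.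

Definition Pi_122_213 : seq (seq nat) := [:: [:: 1; 2; 2]; [:: 2; 1; 3]].

(* Let K be the largest letter of a valid word s, with m >= 2.  A smaller
   letter before two K's is a 122, so the first m-1 letters of s are K; the
   last K splits the rest as u1 K u2, and an inversion in u1 followed by K
   is a 213, so u1 is weakly increasing.  Conversely, for every valid word u
   over the smaller letters and every position p whose prefix of u is weakly
   increasing ("cut"), the insertion K^(m-1) (take p u) K (drop p u) is
   valid, and it determines u and p.  This gives an explicit duplicate-free
   list [words m k] of the valid words over {0..k}, whose size is s_{k+1,m}.
   An insertion into u at p has exactly m + [p = 0] cuts, and exactly one
   cut of u is 0; summing over u yields s_{k+2} = m s_{k+1} + s_k. *)

From mathcomp Require Import all_boot zify.

Set Implicit Arguments.
Unset Strict Implicit.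
Unset Printing Implicit Defensive.

Definition av122_213 (s : seq nat) : Prop :=
  forall a b c, subseq [:: a; b; c] s ->
    ~~ ((a < b) && (b == c)) && ~~ ((b < a) && (a < c)).

Lemma forall_ord3 (P : pred 'I_3) :
  [forall i, P i] = [&& P ord0, P (inord 1) & P (inord 2)].
Proof.
apply/forallP/and3P => [H|[H0 H1 H2] [[|[|[|i]]] Hi]]; first by split; apply: H.
- by rewrite (_ : Ordinal Hi = ord0) //; apply: val_inj.
- by rewrite (_ : Ordinal Hi = inord 1) //; apply: val_inj; rewrite /= inordK.
- by rewrite (_ : Ordinal Hi = inord 2) //; apply: val_inj; rewrite /= inordK.
- by [].
Qed.

Lemma order_iso_122 a b c :
  order_iso [:: a; b; c] [:: 1; 2; 2] = (a < b) && (b == c).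
Proof.
rewrite /order_iso /= forall_ord3 !forall_ord3 /= !inordK //=.
by case: (ltngtP a b); case: (ltngtP b c); case: (ltngtP a c) => //; lia.
Qed.

Lemma order_iso_213 a b c :
  order_iso [:: a; b; c] [:: 2; 1; 3] = (b < a) && (a < c).
Proof.
rewrite /order_iso /= forall_ord3 !forall_ord3 /= !inordK //=.
by case: (ltngtP a b); case: (ltngtP b c); case: (ltngtP a c) => //; lia.
Qed.

Lemma containsP s p :
  reflect (exists t, subseq t s && order_iso t p) (contains s p).
Proof.
apply: (iffP existsP) => [[msk H]|[t /andP[/subseqP[msk Hs ->] H]]].
  by exists (mask msk s); rewrite H mask_subseq.
have Hs' : size msk == size s by apply/eqP.
by exists (Tuple Hs').
Qed.

Lemma order_iso_size3 (t p : seq nat) :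
  order_iso t p -> size p = 3 -> exists a b c, t = [:: a; b; c].
Proof.
move=> /andP[/eqP + _] Hp; rewrite Hp.
by case: t => [|a [|b [|c [|]]]] //= _; exists a, b, c.
Qed.

Lemma avoids_Pi_av s : all (avoids s) Pi_122_213 <-> av122_213 s.
Proof.
rewrite /= andbT /avoids; split.
  move=> /andP[H122 H213] a b c Hs; apply/andP; split.
    apply: contra H122 => H; apply/containsP.
    by exists [:: a; b; c]; rewrite Hs order_iso_122.
  apply: contra H213 => H; apply/containsP.
  by exists [:: a; b; c]; rewrite Hs order_iso_213.
move=> Hav; apply/andP; split; apply/negP => /containsP [t /andP[Hs Hiso]].
  have [a [b [c Et]]] := order_iso_size3 Hiso erefl; subst t.
  by move: (Hav _ _ _ Hs); rewrite -order_iso_122 Hiso.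
have [a [b [c Et]]] := order_iso_size3 Hiso erefl; subst t.
by move: (Hav _ _ _ Hs); rewrite -order_iso_213 Hiso andbF.
Qed.

Lemma av_subseq s t : subseq s t -> av122_213 t -> av122_213 s.
Proof. by move=> Hst H a b c Hs; apply: H; apply: subseq_trans Hst. Qed.

Lemma sorted_nseq n (x : nat) : sorted leq (nseq n x).
Proof. by elim: n => [|[|n] IH] //=; rewrite leqnn. Qed.

Lemma sorted_nseq_cat a (K : nat) x : 0 < a -> all (fun y => y <= K) x ->
  sorted leq (nseq a K ++ x) = all (pred1 K) x.
Proof.
case: a => // a _ Hx; have -> : sorted leq (nseq a.+1 K ++ x) = sorted leq (K :: x).
  by elim: a => //= a <-; rewrite leqnn.
rewrite /= (path_sortedE leq_trans); apply/andP/idP => [[HK _]|HK].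
  by apply/allP => y Hy; rewrite /= eqn_leq (allP Hx y Hy) (allP HK y Hy).
have /all_pred1P -> := HK; split; last exact: sorted_nseq.
by rewrite all_nseq leqnn orbT.
Qed.

Lemma sorted_no_inversion (t : seq nat) :
  (forall a b, subseq [:: a; b] t -> a <= b) -> sorted leq t.
Proof.
elim: t => [|x t IH] //= H; rewrite (path_sortedE leq_trans); apply/andP; split.
  by apply/allP => y Hy; apply: H; rewrite /= eqxx sub1seq.
by apply: IH => a b Hab; apply: H; apply: subseq_trans Hab (subseq_cons _ _).
Qed.

Lemma sorted_subseq_pair (t : seq nat) a b :
  sorted leq t -> subseq [:: a; b] t -> a <= b.
Proof. by move=> Ht Hs; have /= := subseq_sorted leq_trans Hs Ht; rewrite andbT. Qed.

Lemma count_mem_gt1_subseq (K : nat) s : 1 < count_mem K s -> subseq [:: K; K] s.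
Proof.
elim: s => [|y s IH] //=; case: (eqVneq y K) => [Ey|_ /IH //]; subst y.
by rewrite add1n ltnS sub1seq -has_pred1 has_count.
Qed.

Lemma subseq_skip_nseq a (K : nat) l n v : a != K ->
  subseq (a :: l) (nseq n K ++ v) -> subseq (a :: l) v.
Proof. by move=> HaK; elim: n => //= n IH; rewrite (negbTE HaK). Qed.

Lemma subseq_skip_prefix (K : nat) l v w : K \notin v ->
  subseq (K :: l) (v ++ K :: w) -> subseq l w.
Proof.
elim: v => [|y v IH] /=; first by rewrite eqxx.
by rewrite in_cons negb_or eq_sym => /andP[/negbTE -> /IH].
Qed.

Lemma subseq_skip_suffix (K : nat) l v w : K \notin w ->
  subseq (rcons l K) (v ++ K :: w) -> subseq l v.
Proof.
move=> HKw; rewrite -subseq_rev rev_rcons rev_cat rev_cons cat_rcons => H.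
by rewrite -subseq_rev; apply: subseq_skip_prefix H; rewrite mem_rev.
Qed.

(* In an avoiding word bounded by K, where K occurs c+1 times, the first c
   letters are K: a smaller letter before two K's would form a 122. *)
Lemma av_max_prefix (K c : nat) s : all (fun x => x <= K) s -> av122_213 s ->
  count_mem K s = c.+1 -> take c s = nseq c K.
Proof.
elim: s c => [|x s IH] [|c] //= /andP[HxK Hs] Hav Hc.
have Hav' := av_subseq (subseq_cons s x) Hav.
case: (eqVneq x K) Hc => [-> [Hc]|HxK' Hc]; first by rewrite (IH c).
have HKK : subseq [:: K; K] s.
  by apply: count_mem_gt1_subseq; move: Hc; rewrite add0n => ->.
have := Hav x K K; rewrite /= eqxx HKK ltn_neqAle HxK' HxK eqxx.
by move=> /(_ isT) /andP[/negP].
Qed.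

Lemma count_mem1_split (K : nat) t : count_mem K t = 1 ->
  exists t1 t2, [/\ t = t1 ++ K :: t2, K \notin t1 & K \notin t2].
Proof.
move=> Ht; have HK : K \in t by rewrite -has_pred1 has_count Ht.
move: Ht; case/splitPr: HK => t1 t2 Ht; exists t1, t2; split => //.
all: apply/count_memPn; move: Ht; rewrite count_cat /= eqxx; lia.
Qed.

(* Letters smaller than K placed before K in an avoiding word are weakly
   increasing: an inversion b < a before K would form a 213. *)
Lemma av_sorted_before_max (K : nat) x y : av122_213 (x ++ K :: y) ->
  all (fun z => z < K) x -> sorted leq x.
Proof.
move=> Hav Hx; apply: sorted_no_inversion => a b Hab; rewrite leqNgt.
apply/negP => Hba; have HaK : a < K := allP Hx a (mem_subseq Hab (mem_head _ _)).
have Hsub : subseq [:: a; b; K] (x ++ K :: y).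
  by apply: (cat_subseq Hab); rewrite sub1seq mem_head.
by have := Hav a b K Hsub; rewrite Hba HaK andbF.
Qed.

Definition ins_max (K m : nat) (u : seq nat) (p : nat) : seq nat :=
  nseq m.-1 K ++ take p u ++ K :: drop p u.

(* The admissible positions for the last K: those whose prefix is weakly
   increasing. *)
Definition cuts (u : seq nat) : seq nat :=
  [seq p <- iota 0 (size u).+1 | sorted leq (take p u)].

Definition valid (m k : nat) (s : seq nat) : Prop :=
  [/\ all (fun x => x <= k) s, forall j, j <= k -> count_mem j s = m
    & av122_213 s].

Fixpoint words (m k : nat) : seq (seq nat) :=
  if k is k'.+1 then [seq ins_max k m u p | u <- words m k', p <- cuts u]
  else [:: nseq m 0].

Lemma mem_cuts u p : (p \in cuts u) = (p <= size u) && sorted leq (take p u).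
Proof. by rewrite mem_filter mem_iota add0n ltnS andbC. Qed.

Lemma size_ins_max K m u p : size (ins_max K m u p) = m.-1 + (size u).+1.
Proof. by rewrite /ins_max !size_cat size_nseq /= addnS -size_cat cat_take_drop. Qed.

Lemma count_ins_max K m u p j : 0 < m ->
  count_mem j (ins_max K m u p) = (K == j) * m + count_mem j u.
Proof.
move=> Hm; rewrite /ins_max count_cat count_nseq count_cat /=.
rewrite -[u in RHS](cat_take_drop p) count_cat eq_sym; lia.
Qed.

Lemma filter_ins_max K m u p :
  K \notin u -> filter (predC1 K) (ins_max K m u p) = u.
Proof.
move=> HK; rewrite /ins_max !filter_cat filter_nseq /= eqxx /= -filter_cat.
rewrite cat_take_drop; apply/all_filterP/allP => x Hx /=.
by apply: contraNneq HK => <-.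
Qed.

Lemma all_ins_max K m u p : all (fun x => x <= K) u ->
  all (fun x => x <= K) (ins_max K m u p).
Proof.
move=> Hu; rewrite /ins_max !all_cat all_nseq leqnn orbT /= leqnn.
by rewrite -all_cat cat_take_drop.
Qed.

Lemma valid0 m s : valid m 0 s <-> s = nseq m 0.
Proof.
split => [[Hs Hcnt _]|->].
  have /all_pred1P Es : all (pred1 0) s.
    by apply: sub_all Hs => x; rewrite /= leqn0.
  by have := Hcnt 0 (leqnn 0); rewrite {1}Es count_nseq /= mul1n => <-.
split; first by rewrite all_nseq leqnn orbT.
  by move=> j; rewrite leqn0 => /eqP ->; rewrite count_nseq /= mul1n.
move=> a b c /mem_subseq Hs.
have E x : x \in [:: a; b; c] -> x = 0 by move=> /Hs; rewrite mem_nseq => /andP[_ /eqP].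
have -> : a = 0 by apply: E; rewrite inE eqxx.
by have -> : b = 0 by apply: E; rewrite !inE eqxx orbT.
Qed.

Lemma valid_remove_max m k s :
  valid m k.+1 s -> valid m k (filter (predC1 k.+1) s).
Proof.
move=> [Hs Hcnt Hav]; split.
- apply/allP => x; rewrite mem_filter => /andP[/= HxK /(allP Hs)].
  by rewrite leq_eqVlt (negbTE HxK).
- move=> j Hj; rewrite count_filter -(Hcnt j (leqW Hj)); apply: eq_count => x /=.
  by case: (eqVneq x j) => [->|//]; rewrite neq_ltn ltnS Hj.
- exact: av_subseq (filter_subseq _ _) Hav.
Qed.

Lemma valid_decomp m k s : 1 < m -> valid m k.+1 s ->
  exists2 u, valid m k u & exists2 p, p \in cuts u & s = ins_max k.+1 m u p.
Proof.
move=> Hm Hvalid; have [Hs Hcnt Hav] := Hvalid; set K := k.+1.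
have HcK : count_mem K s = m.-1.+1 by rewrite prednK ?Hcnt //; lia.
have Es : s = nseq m.-1 K ++ drop m.-1 s.
  by rewrite -(av_max_prefix Hs Hav HcK) cat_take_drop.
have [t1 [t2 [Et HK1 HK2]]] : exists t1 t2,
    [/\ drop m.-1 s = t1 ++ K :: t2, K \notin t1 & K \notin t2].
  apply: count_mem1_split; move: HcK; rewrite {1}Es count_cat count_nseq /=.
  by rewrite eqxx mul1n; lia.
have Eins : s = ins_max K m (t1 ++ t2) (size t1).
  by rewrite /ins_max take_size_cat // drop_size_cat // -Et.
have HKu : K \notin t1 ++ t2 by rewrite mem_cat negb_or HK1.
exists (t1 ++ t2).
  by rewrite -(filter_ins_max m (size t1) HKu) -Eins; apply: valid_remove_max.
exists (size t1) => //; rewrite mem_cuts take_size_cat // size_cat leq_addr /=.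
apply: (@av_sorted_before_max K _ t2).
  by apply: av_subseq Hav; rewrite Es Et suffix_subseq.
apply/allP => x Hx; have Hxs : x \in s by rewrite Es Et !mem_cat Hx orbT.
by rewrite ltn_neqAle (allP Hs x Hxs) andbT; apply: contraNneq HK1 => <-.
Qed.

(* Inserting a new largest letter K at an admissible position preserves
   avoidance: a 122 through K needs two K's after a smaller letter, which
   only the block in front provides, and a 213 ending at K needs an
   inversion before the last K, which the sorted prefix forbids. *)
Lemma av_ins_max K m u p : av122_213 u -> all (fun x => x < K) u ->
  sorted leq (take p u) -> av122_213 (ins_max K m u p).
Proof.
move=> Hav Hu Hsort a b c Hs.
have HKu : K \notin u by apply/negP => /(allP Hu); rewrite ltnn.
have HKd : K \notin drop p u by apply: contra HKu; apply: mem_drop.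
set v := take p u ++ K :: drop p u.
have HcntK : count_mem K v = 1.
  rewrite count_cat /= eqxx (count_memPn HKd) (count_memPn _) //.
  by apply: contra HKu; apply: mem_take.
have Hins : all (fun x => x <= K) (ins_max K m u p).
  by apply: all_ins_max; apply: sub_all Hu => y /ltnW.
have Hbnd x : x \in [:: a; b; c] -> x <= K by move=> /(mem_subseq Hs) /(allP Hins).
have HnoK : a != K -> b != K -> c != K ->
    ~~ ((a < b) && (b == c)) && ~~ ((b < a) && (a < c)).
  move=> Ha Hb Hc; apply: Hav; rewrite -(filter_ins_max m p HKu).
  by rewrite subseq_filter Hs /= Ha Hb Hc.
have Hb : b <= K by apply: Hbnd; rewrite !inE eqxx orbT.
have Hc : c <= K by apply: Hbnd; rewrite !inE eqxx !orbT.
apply/andP; split; apply/negP.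
  move=> /andP[Hab /eqP Ebc]; subst c.
  have HaK : a != K by rewrite neq_ltn (leq_trans Hab Hb).
  case: (eqVneq b K) => [Eb|HbK]; last by have := HnoK HaK HbK HbK; rewrite Hab eqxx.
  subst b; have /cons_subseq HKK := subseq_skip_nseq HaK Hs.
  by have := leq_count_subseq (pred1 K) HKK; rewrite HcntK /= eqxx.
move=> /andP[Hba Hac].
have HaK : a != K by rewrite neq_ltn (leq_trans Hac Hc).
have HbK : b != K by rewrite neq_ltn (ltn_trans Hba (leq_trans Hac Hc)).
case: (eqVneq c K) => [Ec|HcK]; last first.
  by have := HnoK HaK HbK HcK; rewrite Hba Hac andbF.
subst c; have HabK : subseq (rcons [:: a; b] K) v := subseq_skip_nseq HaK Hs.
have Hab := subseq_skip_suffix HKd HabK.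
by have := sorted_subseq_pair Hsort Hab; rewrite leqNgt Hba.
Qed.

Lemma valid_ins_max m k u p : 0 < m -> valid m k u -> p \in cuts u ->
  valid m k.+1 (ins_max k.+1 m u p).
Proof.
move=> Hm [Hu Hcnt Hav]; rewrite mem_cuts => /andP[_ Hsort].
have HuK : all (fun x => x < k.+1) u by [].
have HKu : k.+1 \notin u by apply/negP => /(allP HuK); rewrite ltnn.
split; last exact: av_ins_max.
  by apply: all_ins_max; apply: sub_all Hu => x /leqW.
move=> j Hj; rewrite count_ins_max //; case: (eqVneq k.+1 j) => [<-|HKj].
  by rewrite (count_memPn HKu) mul1n addn0.
by rewrite mul0n add0n Hcnt // -ltnS ltn_neqAle eq_sym HKj.
Qed.

Lemma valid_words m k s : 1 < m -> valid m k s <-> s \in words m k.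
Proof.
move=> Hm; elim: k s => [|k IH] s; first by rewrite valid0 inE; split => /eqP.
split => [/(valid_decomp Hm) [u Hu [p Hp ->]]|/allpairsPdep [u [p [Hu Hp ->]]]].
  by apply: allpairs_f_dep => //; apply/IH.
by apply: valid_ins_max (ltnW Hm) _ Hp; apply/IH.
Qed.

Lemma size_words m k s : 0 < m -> s \in words m k -> size s = k.+1 * m.
Proof.
move=> Hm; elim: k s => [|k IH] s /=.
  by rewrite inE => /eqP ->; rewrite size_nseq mul1n.
by case/allpairsPdep => u [p [Hu _ ->]]; rewrite size_ins_max (IH _ Hu); lia.
Qed.

Lemma ins_max_inj K m u u' p p' : K \notin u -> K \notin u' ->
  p <= size u -> p' <= size u' ->
  ins_max K m u p = ins_max K m u' p' -> u = u' /\ p = p'.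
Proof.
move=> HKu HKu' Hp Hp' E.
have Eu : u = u' by rewrite -(filter_ins_max m p HKu) E filter_ins_max.
subst u'; split => //; move/(congr1 (drop m.-1)): E.
rewrite /ins_max !drop_size_cat ?size_nseq // => /(congr1 (index K)).
have HKt q : K \notin take q u by apply: contra HKu; apply: mem_take.
by rewrite !index_cat (negbTE (HKt p)) (negbTE (HKt p')) /= eqxx !addn0 !size_takel.
Qed.

Lemma uniq_words m k : 1 < m -> uniq (words m k).
Proof.
move=> Hm; elim: k => [|k IH] //=; apply: allpairs_uniq_dep => //.
  by move=> u _; apply: filter_uniq; apply: iota_uniq.
move=> _ _ /allpairsPdep [u [p [Hu Hp ->]]] /allpairsPdep [u' [p' [Hu' Hp' ->]]] /= E.
have HK v : v \in words m k -> k.+1 \notin v.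
  by move=> /(valid_words _ _ Hm) [Hv _ _]; apply/negP => /(allP Hv); rewrite ltnn.
move: Hp Hp'; rewrite !mem_cuts => /andP[Hp _] /andP[Hp' _].
by have [-> ->] := ins_max_inj (HK _ Hu) (HK _ Hu') Hp Hp' E.
Qed.

(* The weakly increasing prefixes of an insertion into a nonempty word of
   smaller letters: the prefixes inside the block K^(m-1), plus K^m itself
   when the last K was inserted in front. *)
Lemma sorted_take_ins_max K m v p q : 1 < m -> all (fun x => x < K) v ->
  v != [::] -> sorted leq (take q (ins_max K m v p)) = (q < m + (p == 0)).
Proof.
move=> Hm Hv Hv0; have := all_ins_max m p (sub_all (fun x => @ltnW x K) Hv).
rewrite /ins_max all_cat take_cat size_nseq => /andP[_ Hw].
case: (ltnP q m.-1) => Hq.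
  rewrite take_nseq ?sorted_nseq; last exact: ltnW.
  by apply/esym; rewrite ltn_addr // (leq_trans Hq) // leq_pred.
rewrite -(subnKC Hq) addKn; move: (q - m.-1) => j {q Hq}.
rewrite sorted_nseq_cat; last 2 first.
- by rewrite -subn1 subn_gt0.
- by apply/allP => x /mem_take /(allP Hw).
rewrite -[in RHS](prednK (ltnW Hm)) addSn ltnS leq_add2l.
case: v Hv Hv0 Hw => [//|h v] /= /andP[HhK _] _ _.
have HhK' : (h == K) = false by rewrite ltn_eqF.
by case: p => [|p]; case: j => [|[|j]] /=; rewrite ?eqxx ?HhK'.
Qed.

Lemma size_cuts_ins_max K m v p : 1 < m -> all (fun x => x < K) v ->
  v != [::] -> size (cuts (ins_max K m v p)) = m + (p == 0).
Proof.
move=> Hm Hv Hv0; rewrite /cuts (eq_filter (fun q => sorted_take_ins_max p q Hm Hv Hv0)).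
rewrite -[m + _]add0n filter_iota_ltn ?size_iota // size_ins_max.
by apply: leq_trans (leq_add (leqnn m) (leq_b1 _)) _; lia.
Qed.

Lemma sum_cuts_eq0 v : \sum_(p <- cuts v) (p == 0) = 1.
Proof.
rewrite /cuts /= take0 /= big_cons /= big1_seq // => p /andP[_].
by rewrite mem_filter mem_iota => /andP[_ /andP[]]; case: p.
Qed.

Lemma size_words_succ m k : size (words m k.+1) = \sum_(u <- words m k) size (cuts u).
Proof. by rewrite /= size_allpairs_dep sumnE big_map. Qed.

Lemma size_words1 m : size (words m 1) = m.+1.
Proof.
rewrite size_words_succ /= big_seq1 /cuts size_filter size_nseq.
rewrite -[RHS](size_iota 0 m.+1) -count_predT; apply: eq_in_count => q.
by rewrite mem_iota add0n ltnS /= => Hq; rewrite take_nseq // sorted_nseq.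
Qed.

(* The recurrence: the insertions into a valid word u together have
   m * size (cuts u) + 1 cuts, and summing over u gives
   m * size (words m k.+1) + size (words m k). *)
Lemma size_words_rec m k : 1 < m ->
  size (words m k.+2) = m * size (words m k.+1) + size (words m k).
Proof.
move=> Hm; rewrite size_words_succ [words m k.+1]/= big_allpairs_dep /=.
rewrite (eq_big_seq (fun v => m * size (cuts v) + 1)); last first.
  move=> v Hv; have [Hvk _ _] := (valid_words _ _ Hm).2 Hv.
  have Hv0 : v != [::] by rewrite -size_eq0 (size_words (ltnW Hm) Hv) muln_eq0; lia.
  rewrite (eq_big_seq (fun p => m + (p == 0))) => [|p _]; last exact: size_cuts_ins_max.
  rewrite big_split sum_cuts_eq0 /= -sum1_size big_distrr /=.
  by rewrite (eq_bigr _ (fun _ _ => muln1 m)).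
by rewrite big_split /= sum1_size -big_distrr -size_words_succ.
Qed.

Lemma count_mem_map_val n (w : seq 'I_n) (o : 'I_n) :
  count_mem o w = count_mem (val o) (map val w).
Proof. by rewrite count_map; apply: eq_count => x /=; rewrite -(inj_eq val_inj). Qed.

Lemma multiperm_valid k m (w : (k.+1 * m).-tuple 'I_k.+1) :
  is_multiperm w && all (fun p => avoids (map val w) p) Pi_122_213
  <-> valid m k (map val w).
Proof.
split => [/andP[/forallP Hmp /avoids_Pi_av Hav]|[Hw Hcnt Hav]].
  split => //; first by apply/allP => _ /mapP [i _ ->]; rewrite -ltnS ltn_ord.
  by move=> j Hj; have /eqP := Hmp (Ordinal (Hj : j < k.+1)); rewrite count_mem_map_val.
apply/andP; split; last exact/avoids_Pi_av.
by apply/forallP => o; rewrite count_mem_map_val Hcnt // -ltnS ltn_ord.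
Qed.

Lemma valid_tuple k m s : 1 < m -> valid m k s ->
  exists w : (k.+1 * m).-tuple 'I_k.+1, map val w = s.
Proof.
move=> Hm Hs; have [Hk _ _] := Hs.
have Hsz : size (map (@inord k) s) == k.+1 * m.
  by rewrite size_map (size_words (ltnW Hm) ((valid_words _ _ Hm).1 Hs)).
exists (Tuple Hsz); rewrite /= -map_comp; apply: map_id_in => x Hx /=.
by rewrite inordK // ltnS (allP Hk x Hx).
Qed.

Lemma s_nm_words k m : 1 < m -> s_nm k.+1 m Pi_122_213 = size (words m k).
Proof.
move=> Hm; rewrite /s_nm cardE -(size_map (fun w : _.-tuple _ => map val w)).
apply: perm_size; apply: uniq_perm; last move=> s.
- by rewrite map_inj_uniq ?enum_uniq // => w1 w2 /(inj_map val_inj) /val_inj.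
- exact: uniq_words.
apply/mapP/idP => [[w]|/(valid_words _ _ Hm) Hs].
  by rewrite mem_enum inE => /multiperm_valid Hw ->; apply/valid_words.
case/(valid_tuple Hm): (Hs) => w Ew; exists w => //.
by rewrite mem_enum inE; apply/multiperm_valid; rewrite Ew.
Qed.

Theorem theorem6 :
  forall m : nat, 2 <= m ->
    s_nm 1 m Pi_122_213 = 1 /\
    s_nm 2 m Pi_122_213 = m + 1 /\
    (forall n : nat, 3 <= n ->
       s_nm n m Pi_122_213 =
         m * s_nm n.-1 m Pi_122_213 + s_nm n.-2 m Pi_122_213).
Proof.
move=> m Hm; split; first by rewrite s_nm_words.
split; first by rewrite s_nm_words // size_words1 addn1.
case=> [|[|[|k]]] // _.
by rewrite /= !s_nm_words // size_words_rec.
Qed.
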